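(* Let $m \equiv 3 \pmod 4$ with $m > 3$, $n = 3^m - 1$, $v = (3^{(m-1)/2}-1)/2$ and $\delta = (3^{(m-1)/2}+11)/2$. Then $\gcd(v,n) = 1$, and, setting $T_{(0,1,m)}(v) = \{ vi \bmod n : i \in T_{(0,1,m)}\}$, we have $\{n-(\delta-1), \ldots, n-2, n-1\} \subseteq T_{(0,1,m)}(v)$.
   Context: For an integer $0 \le j \le n-1$ with $3$-adic expansion $j = \sum_{t=0}^{m-1} j_t 3^t$, $j_t \in \{0,1,2\}$, let $w_3(j) = \sum_{t=0}^{m-1} j_t$. For distinct $i_1,i_2 \in \{0,1,2,3\}$, $T_{(i_1,i_2,m)} = \{1 \le j \le n-1 : w_3(j) \equiv i_1 \text{ or } i_2 \pmod 4\}$. For an integer $b$, $b \bmod n$ is the unique $b_0 \in \{0,\ldots,n-1\}$ with $b \equiv b_0 \pmod n$. *)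

From mathcomp Require Import all_boot.
Set Implicit Arguments. Unset Strict Implicit. Unset Printing Implicit Defensive.

Definition w3 (m j : nat) : nat := \sum_(t < m) ((j %/ 3 ^ t) %% 3).

Definition inT (i1 i2 m j : nat) : bool :=
  (1 <= j <= (3 ^ m - 1) - 1) && ((w3 m j %% 4 == i1) || (w3 m j %% 4 == i2)).

(* Write m = 1 + 2h with h odd and 3^h = 2v + 1, so that n = 3^m - 1 =
   12v^2 + 12v + 2 and 6v(3^h + 1) = n - 2.  Hence for even t the number
   i = 3t(3^h + 1), whose ternary blocks of lengths 1, h, h are 0, t, t,
   satisfies vi = -t (mod n); for odd t <= v the number
   i = 1 + 3(v + t)(3^h + 1), with blocks 1, v + t, v + t, satisfies
   vi = v - (v + t) = -t.  Ternary weight and value have the same parity, so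
   a block repeated twice contributes 0 (mod 4) to the weight and both
   weights are 0 or 1 (mod 4).  The remaining odd t in (v, v + 5], namely
   v + 2 and v + 4, are hit by explicit numbers of weight 5. *)
From mathcomp Require Import all_boot.
From mathcomp Require Import zify.

Set Implicit Arguments.
Unset Strict Implicit.
Unset Printing Implicit Defensive.

Lemma w3_0 k : w3 k 0 = 0.
Proof. by rewrite /w3 big1 // => i _; rewrite div0n mod0n. Qed.

Lemma w3_cat k l a b : a < 3 ^ k -> w3 (k + l) (a + 3 ^ k * b) = w3 k a + w3 l b.
Proof.
move=> ha; rewrite /w3 big_split_ord /=; congr (_ + _); apply: eq_bigr => i _ /=.
- have ik : i < k := ltn_ord i.
  have e3 : 3 ^ k = 3 ^ (k - i).-1 * 3 * 3 ^ i.
    by rewrite -expnSr prednK ?subn_gt0 // -expnD subnK // ltnW.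
  have -> : a + 3 ^ k * b = 3 ^ (k - i).-1 * b * 3 * 3 ^ i + a.
    by rewrite e3 addnC mulnAC [_ * b * 3]mulnAC.
  by rewrite divnMDl ?expn_gt0 // modnMDl.
- by rewrite expnD divnMA [3 ^ k * b]mulnC addnC divnMDl ?expn_gt0 // (divn_small ha) addn0.
Qed.

Lemma w3_digit k d e : d < 3 -> w3 k.+1 (d + 3 * e) = d + w3 k e.
Proof.
move=> hd; rewrite -add1n -{1}(expn1 3) w3_cat ?expn1 //.
by rewrite /w3 big_ord1 expn0 divn1 modn_small.
Qed.

Lemma w3_small k d : 0 < k -> d < 3 -> w3 k d = d.
Proof. by case: k => // k _ hd; rewrite -[d]addn0 -(muln0 3) w3_digit // w3_0. Qed.

Lemma odd_w3 k a : a < 3 ^ k -> odd (w3 k a) = odd a.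
Proof.
elim: k a => [|k IH] a ha.
  by move: ha; rewrite expn0 ltnS leqn0 => /eqP ->; rewrite w3_0.
rewrite {1}(divn_eq a 3) addnC mulnC w3_digit ?ltn_mod // oddD IH.
  by rewrite {3}(divn_eq a 3) oddD oddM andbT addbC.
by rewrite ltn_divLR // mulnC -expnS.
Qed.

Lemma w3_block h d p r : d < 3 -> p < 3 ^ h ->
  w3 (1 + h + h) (d + 3 * (p + 3 ^ h * r)) = d + w3 h p + w3 h r.
Proof.
move=> hd hp; rewrite add1n.
have -> : d + 3 * (p + 3 ^ h * r) = (d + 3 * p) + 3 ^ h.+1 * r.
  by rewrite mulnDr addnA expnS mulnA.
by rewrite w3_cat ?w3_digit ?addnA // expnS; lia.
Qed.

Lemma w3_double_mod4 k a : a < 3 ^ k -> ~~ odd a -> (w3 k a + w3 k a) %% 4 = 0.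
Proof. by move=> ha; rewrite -(odd_w3 ha); lia. Qed.

Lemma inT01E m i : inT 0 1 m i = (0 < i < 3 ^ m - 1) && (w3 m i %% 4 <= 1).
Proof.
rewrite /inT; congr andb; first by apply/idP/idP; lia.
by case: (w3 m i %% 4) => [|[|]].
Qed.

Lemma modn_opp x t N : 0 < t <= N -> N %| x + t -> x %% N = N - t.
Proof.
move=> /andP [t0 tN] /dvdnP [s e].
have s0 : 0 < s by case: s e; lia.
have sN : N <= s * N by rewrite leq_pmull.
have -> : x = (s - 1) * N + (N - t) by rewrite mulnBl mul1n; lia.
by rewrite modnMDl modn_small //; lia.
Qed.

Lemma expn3_mod4 h : odd h -> 3 ^ h %% 4 = 3.
Proof.
move=> oh; rewrite -(odd_double_half h) oh add1n expnS -mul2n expnM.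
by rewrite -modnMmr -modnXm exp1n.
Qed.

Lemma expn3_sub1_quadratic h v : 3 ^ h = 2 * v + 1 ->
  3 ^ (1 + h + h) - 1 = 12 * v * v + 12 * v + 2.
Proof. by move=> pow3h; rewrite expnD expnD expn1 pow3h; lia. Qed.

Lemma coprime_quadratic_odd v : odd v -> coprime v (12 * v * v + 12 * v + 2).
Proof.
move=> v_odd; rewrite -coprime_modr.
have -> : 12 * v * v + 12 * v + 2 = (12 * v + 12) * v + 2 by lia.
by rewrite modnMDl coprime_modr coprimen2.
Qed.

Section TernaryWitnesses.

Variables h v : nat.
Hypothesis h_gt2 : 2 < h.
Hypothesis pow3h : 3 ^ h = 2 * v + 1.
Hypothesis v_odd : odd v.

Local Notation m := (1 + h + h).
Local Notation n := (12 * v * v + 12 * v + 2).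

Lemma v_ge13 : 13 <= v.
Proof. have : 3 ^ 3 <= 3 ^ h by rewrite leq_exp2l. by rewrite pow3h; lia. Qed.

Lemma inT01_block d p r : d < 3 -> p < 3 ^ h ->
  0 < d + 3 * (p + 3 ^ h * r) < n ->
  (d + w3 h p + w3 h r) %% 4 <= 1 -> inT 0 1 m (d + 3 * (p + 3 ^ h * r)).
Proof. by move=> hd hp hi hw; rewrite inT01E w3_block // (expn3_sub1_quadratic pow3h) hi. Qed.

Lemma witness_even t : ~~ odd t -> 0 < t <= v + 5 ->
  exists2 i, inT 0 1 m i & n %| v * i + t.
Proof.
move=> t_even ht; have v13 := v_ge13.
have [s et] : exists s, t = 2 * s by exists t./2; lia.
rewrite {}et in t_even ht *.
exists (0 + 3 * (2 * s + 3 ^ h * (2 * s))).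
  apply: inT01_block; rewrite ?pow3h //; first lia; first nia.
  by rewrite add0n w3_double_mod4 ?pow3h ?odd_double //; lia.
by apply/dvdnP; exists s; rewrite pow3h; nia.
Qed.

Lemma witness_odd_le t : odd t -> 0 < t <= v ->
  exists2 i, inT 0 1 m i & n %| v * i + t.
Proof.
move=> t_odd ht; have v13 := v_ge13.
have [r er] : exists r, v + t = 2 * r by exists (v + t)./2; move: v_odd t_odd; lia.
exists (1 + 3 * ((v + t) + 3 ^ h * (v + t))).
  apply: inT01_block; rewrite ?pow3h //; first lia; first by clear -ht; nia.
  by rewrite -addnA -modnDmr w3_double_mod4 ?pow3h ?oddD ?v_odd ?t_odd //; lia.
by apply/dvdnP; exists r; rewrite pow3h er; clear -er; nia.
Qed.

Lemma witness_v2 : exists2 i, inT 0 1 m i & n %| v * i + (v + 2).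
Proof.
have v13 := v_ge13; have h0 : 0 < h by lia.
exists (2 + 3 * (1 + 3 ^ h * 2)).
  by apply: inT01_block; rewrite ?w3_small ?pow3h //; nia.
by apply/dvdnP; exists 1; rewrite pow3h; nia.
Qed.

Lemma witness_v4 : exists2 i, inT 0 1 m i & n %| v * i + (v + 4).
Proof.
have v13 := v_ge13; have h0 : 0 < h by lia.
exists (2 + 3 * (3 + 3 ^ h * 4)).
  apply: inT01_block; rewrite ?pow3h //; first lia; first nia.
  rewrite -(prednK h0) -[3]/(0 + 3 * 1) -[4]/(1 + 3 * 1) !w3_digit // !w3_small //.
  by lia.
by apply/dvdnP; exists 2; rewrite pow3h; nia.
Qed.

Lemma exists_inT01_modn_opp t : 0 < t <= v + 5 ->
  exists i, inT 0 1 m i /\ (v * i) %% n = n - t.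
Proof.
move=> ht; have v13 := v_ge13.
suff [i hi dvd_n] : exists2 i, inT 0 1 m i & n %| v * i + t.
  by exists i; split; rewrite // (modn_opp _ dvd_n) //; lia.
have [t_odd | t_even] := boolP (odd t); last exact: witness_even.
have [t_le | t_gt] := leqP t v; first by apply: witness_odd_le; lia.
have [-> | ->] : t = v + 2 \/ t = v + 4 by move: v_odd t_odd; lia.
  exact: witness_v2.
exact: witness_v4.
Qed.

End TernaryWitnesses.

Theorem lemma6 (m : nat) (hm4 : m %% 4 = 3) (hm : 3 < m) :
  let n := 3 ^ m - 1 in
  let v := (3 ^ ((m - 1) %/ 2) - 1) %/ 2 in
  let delta := (3 ^ ((m - 1) %/ 2) + 11) %/ 2 in
  coprime v n /\
  (forall k, n - (delta - 1) <= k <= n - 1 ->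
     exists i, inT 0 1 m i /\ (v * i) %% n = k).
Proof.
move=> n v delta.
set h := (m - 1) %/ 2.
have em : m = 1 + h + h by rewrite /h; lia.
have h_odd : odd h by rewrite /h; lia.
have pow3h_mod4 := expn3_mod4 h_odd.
have pow3h : 3 ^ h = 2 * v + 1 by rewrite /v -/h; lia.
have v_odd : odd v by rewrite /v -/h; lia.
have h_gt2 : 2 < h by rewrite /h; lia.
have en : n = 12 * v * v + 12 * v + 2 by rewrite /n em (expn3_sub1_quadratic pow3h).
have edelta : delta = v + 6 by rewrite /delta -/h; lia.
split; first by rewrite en coprime_quadratic_odd.
move=> k hk; rewrite em.
have := @exists_inT01_modn_opp h v h_gt2 pow3h v_odd (n - k).
rewrite -en subKn; last by lia.
by apply; lia.
Qed.
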